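(* Let $G$ be a connected graph, $S$ a separating vertex set of $G$, and $V_1,\ldots,V_k$ the vertex sets of the connected components of $G-S$. Suppose each vertex of $S$ has a neighbor in each $V_i$, $1\leq i\leq k$. Then every connected forcing set of $G$ contains a vertex from at least $k-1$ of the sets $V_1,\ldots,V_k$. Moreover, if either $k=2$ and $Z(G[V_i])>|S|$ for both $i\in\{1,2\}$, or $k\geq 3$, then every connected forcing set of $G$ contains a vertex of $S$.
   Context: Zero forcing: given a graph $H$ and a set $T$ of initially colored vertices, if a colored vertex $u$ has exactly one uncolored neighbor $v$, then $v$ becomes colored. $T$ is a zero forcing set if repeated application colors all vertices; $Z(H)$ is the minimum size of a zero forcing set of $H$. A connected forcing set is a zero forcing set $T$ with $G[T]$ connected. *)

(* A finite simple graph is a symmetric irreflexive e : rel T. *)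
From mathcomp Require Import all_boot.
Set Implicit Arguments. Unset Strict Implicit. Unset Printing Implicit Defensive.

Section ZeroForcing.
Variables (T : finType) (e : rel T).

Definition induced_rel (A : {set T}) : rel T :=
  [rel x y | [&& e x y, x \in A & y \in A]].

Definition connected_in (A : {set T}) : Prop :=
  forall x y, x \in A -> y \in A -> connect (induced_rel A) x y.

Definition uncolored_nbrs (A C : {set T}) (u : T) : {set T} :=
  [set w in A | e u w] :\: C.

Definition force_step (A C : {set T}) : {set T} :=
  C :|: [set v | [exists u in C :&: A, uncolored_nbrs A C u == [set v]]].

(* final colored set: after #|T| rounds the process has stabilized *)
Definition zf_closure (A X : {set T}) : {set T} := iter #|T| (force_step A) X.

Definition zero_forcing_set (A X : {set T}) : bool :=
  (X \subset A) && (zf_closure A X == A).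

(* Z(G[A]); A itself is always a zero forcing set, hence the default #|A| *)
Definition zf_number (A : {set T}) : nat :=
  \big[minn/#|A|]_(X : {set T} | zero_forcing_set A X) #|X|.

Definition connected_forcing_set (X : {set T}) : Prop :=
  zero_forcing_set setT X /\ connected_in X.

Definition comp_of (S : {set T}) (x : T) : {set T} :=
  [set y | (y \notin S) && connect (induced_rel (~: S)) x y].

Definition components_minus (S : {set T}) : {set {set T}} :=
  [set comp_of S x | x in ~: S].

End ZeroForcing.

From mathcomp Require Import all_boot zify.
Set Implicit Arguments. Unset Strict Implicit. Unset Printing Implicit Defensive.

(* A vertex of a
   component V of G - S can only be forced from V itself or from S.  If two
   components V, W contain no vertex of X, the first vertex coloured in V u W
   is forced by some s in S, but s has an uncoloured neighbour in both V and W,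
   so it cannot force: X is not forcing.  If one component V contains no
   vertex of X, the vertices of V forced from S form a zero forcing set of
   G[V], and they are at most |S| since a vertex forces at most once; hence
   Z(G[V]) <= |S|.  Finally a connected X disjoint from S lies in a single
   component, which together with these two facts gives the claims. *)

Lemma card_le_functional (T U : finType) (A : {set T}) (B : {set U})
    (R : T -> U -> bool) :
  (forall x, x \in A -> exists2 u, u \in B & R x u) ->
  (forall x y u, R x u -> R y u -> x = y) -> #|A| <= #|B|.
Proof.
move=> AB Rfun; pose h u := [pick x in A | R x u].
rewrite -(card_imset A Some_inj); apply: leq_trans (leq_imset_card h B).
apply: subset_leq_card; apply/subsetP=> _ /imsetP[x xA ->]; have [u uB Rxu] := AB x xA.
apply/imsetP; exists u => //; rewrite /h; case: pickP => [y /andP[_ Ryu]|].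
  by rewrite (Rfun _ _ _ Ryu Rxu).
by move/(_ x); rewrite xA Rxu.
Qed.

Section Components.
Variables (T : finType) (e : rel T) (S : {set T}).
Hypothesis e_sym : symmetric e.

Local Notation comps := (components_minus e S).

Lemma induced_rel_sym (A : {set T}) : symmetric (induced_rel e A).
Proof. by move=> x y; rewrite /induced_rel /= e_sym (andbC (y \in A)). Qed.

Lemma comp_of_eq x y : y \in comp_of e S x -> comp_of e S y = comp_of e S x.
Proof.
rewrite inE => /andP[_ cxy]; have cs := sym_connect_sym (induced_rel_sym (~: S)).
apply/setP=> z; rewrite !inE; congr (_ && _); apply/idP/idP => h.
  exact: connect_trans cxy h.
by apply: connect_trans h; rewrite cs.
Qed.

Lemma componentsP V : V \in comps -> exists2 x, x \notin S & V = comp_of e S x.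
Proof. by case/imsetP=> x; rewrite inE => xS ->; exists x. Qed.

Lemma component_nonempty V : V \in comps -> exists x, x \in V.
Proof. by case/componentsP=> x xS ->; exists x; rewrite inE xS connect0. Qed.

Lemma component_eq V W y : V \in comps -> W \in comps -> y \in V -> y \in W -> V = W.
Proof.
by move=> /componentsP[a _ ->] /componentsP[b _ ->] ya yb; rewrite -(comp_of_eq ya) (comp_of_eq yb).
Qed.

Lemma component_adj V u v : V \in comps -> u \notin S -> v \in V -> e u v -> u \in V.
Proof.
case/componentsP=> x _ ->{V} uS; rewrite !inE uS => /andP[vS cxv] euv.
by apply: connect_trans cxv (connect1 _); rewrite /induced_rel /= e_sym euv !inE uS vS.
Qed.

Lemma connected_meets_one_component (X : {set T}) :
  S :&: X = set0 -> connected_in e X ->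
  #|[set V in comps | V :&: X != set0]| <= 1.
Proof.
move=> SX Xc; have notS z : z \in X -> z \notin S.
  by move=> zX; apply/negP=> zS; move/setP: SX => /(_ z); rewrite !inE zS zX.
have [->|[x0 x0X]] := set_0Vmem X.
  by rewrite (_ : [set _ in _ | _] = set0) ?cards0 //; apply/setP=> V; rewrite !inE setI0 eqxx andbF.
rewrite -(cards1 (comp_of e S x0)); apply: subset_leq_card; apply/subsetP=> V.
rewrite !inE => /andP[Vc /set0Pn[z /setIP[zV zX]]].
have zc : z \in comp_of e S x0.
  rewrite inE notS //=; apply: connect_sub (Xc x0 z x0X zX) => a b /and3P[eab aX bX].
  by apply: connect1; rewrite /induced_rel /= eab !inE !notS.
by case/componentsP: Vc zV => y _ -> zV; rewrite -(comp_of_eq zV) (comp_of_eq zc).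
Qed.

End Components.

Section Forcing.
Variables (T : finType) (e : rel T).

Lemma force_step_sub (A Y : {set T}) : Y \subset force_step e A Y.
Proof. exact: subsetUl. Qed.

Lemma force_stepP (A Y : {set T}) v :
  v \in force_step e A Y -> v \notin Y ->
  exists2 u, u \in Y :&: A & uncolored_nbrs e A Y u = [set v].
Proof.
by rewrite inE => /orP[->//|]; rewrite inE => /exists_inP[u uY /eqP h] _; exists u.
Qed.

Lemma uncolored_nbrsS (A C1 C2 : {set T}) u :
  C1 \subset C2 -> uncolored_nbrs e A C2 u \subset uncolored_nbrs e A C1 u.
Proof. exact: setDS. Qed.

Lemma iter_force_step_mono (A X : {set T}) t t' :
  t <= t' -> iter t (force_step e A) X \subset iter t' (force_step e A) X.
Proof.
move/subnK <-; elim: (t' - t) => [|n IH]; first by rewrite add0n.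
exact: subset_trans IH (force_step_sub _ _).
Qed.

Lemma sub_zf_closure (A X : {set T}) : X \subset zf_closure e A X.
Proof. exact: (iter_force_step_mono A X (leq0n _)). Qed.

(* Each round either stabilizes or colors a new vertex, so #|T| rounds suffice. *)
Lemma zf_closure_stable (A X : {set T}) :
  force_step e A (zf_closure e A X) = zf_closure e A X.
Proof.
set f := force_step e A.
suff grow n : iter n.+1 f X = iter n f X \/ n < #|iter n.+1 f X|.
  by case: (grow #|T|) => [|]; [rewrite /zf_closure -iterS | rewrite ltnNge max_card].
elim: n => [|n [eqn|lt]].
- have [eqn|neq] := eqVneq (iter 1 f X) X; first by left.
  right; apply: leq_ltn_trans (leq0n #|X|) (proper_card _).
  by rewrite properEneq eq_sym neq force_step_sub.
- by left; rewrite iterS eqn.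
- have [eqn|neq] := eqVneq (iter n.+2 f X) (iter n.+1 f X); first by left.
  right; apply: leq_ltn_trans lt (proper_card _).
  by rewrite properEneq eq_sym neq [iter n.+2 _ _]iterS force_step_sub.
Qed.

Lemma zf_closure_sub (A X : {set T}) : X \subset A -> zf_closure e A X \subset A.
Proof.
move=> XA; rewrite /zf_closure; elim: #|T| => //= n IH.
rewrite /force_step subUset IH; apply/subsetP=> v; rewrite inE => /exists_inP[u _ /eqP h].
have : v \in uncolored_nbrs e A (iter n (force_step e A) X) u by rewrite h set11.
by rewrite !inE => /andP[_ /andP[]].
Qed.

Lemma stable_uncolored_nbrs (A Y : {set T}) u v :
  force_step e A Y = Y -> u \in Y :&: A -> uncolored_nbrs e A Y u != [set v].
Proof.
move=> fixY uYA; apply/eqP=> hu.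
have vY : v \in force_step e A Y by rewrite inE; apply/orP; right; rewrite inE; apply/exists_inP; exists u; rewrite ?hu.
have : v \in uncolored_nbrs e A Y u by rewrite hu set11.
by rewrite inE -fixY vY.
Qed.

Lemma zf_number_le (A F : {set T}) : zero_forcing_set e A F -> zf_number e A <= #|F|.
Proof.
move=> zF; rewrite /zf_number; have : F \in index_enum {set T} by rewrite mem_index_enum.
elim: (index_enum _) => [//|Y r IH]; rewrite inE big_cons.
case/orP=> [/eqP<-|Fr]; first by rewrite zF geq_minl.
by case: (zero_forcing_set e A Y); [apply: leq_trans (geq_minr _ _) (IH Fr) | apply: IH].
Qed.

End Forcing.

Section ForcingAcrossSeparator.
Variables (T : finType) (e : rel T) (S X : {set T}).
Hypothesis e_sym : symmetric e.
Hypothesis S_adj : forall s, s \in S -> forall V, V \in components_minus e S ->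
  exists2 v, v \in V & e s v.

Local Notation comps := (components_minus e S).
Local Notation coloured t := (iter t (force_step e setT) X).

Lemma avoided_components_not_forcing V W :
  V \in comps -> W \in comps -> V != W -> V :&: X = set0 -> W :&: X = set0 ->
  zf_closure e setT X != setT.
Proof.
move=> Vc Wc VW VX WX.
have uncoloured t : coloured t :&: (V :|: W) = set0.
  elim: t => [|t IH]; first by rewrite /= setIUr setIC VX setIC WX setU0.
  have notC y : y \in V :|: W -> y \notin coloured t.
    by move=> yD; apply/negP=> yC; move/setP: IH => /(_ y); rewrite inE yC yD in_set0.
  apply/setP=> v; rewrite inE in_set0; apply/negP=> /andP[vC vD].
  have [u /setIP[uC _] hu] := force_stepP vC (notC v vD).
  have : v \in uncolored_nbrs e setT (coloured t) u by rewrite hu set11.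
  rewrite !inE andTb => /andP[_ euv].
  have uS : u \in S.
    have uD : u \notin V :|: W := contraL (notC u) uC.
    apply: contraR uD => uS; rewrite inE.
    by case/setUP: vD => vD; rewrite (component_adj e_sym _ uS vD euv) ?orbT.
  have [a aV eua] := S_adj uS Vc; have [b bW eub] := S_adj uS Wc.
  have : a \in [set v] by rewrite -hu !inE eua notC // inE aV.
  have : b \in [set v] by rewrite -hu !inE eub notC // inE bW orbT.
  rewrite !inE => /eqP bv /eqP av; subst a b.
  by rewrite (component_eq e_sym Vc Wc aV bW) eqxx in VW.
apply/negP=> /eqP hcl; have [x xV] := component_nonempty Vc.
by move/setP: (uncoloured #|T|) => /(_ x); rewrite -/(zf_closure e setT X) hcl !inE xV.
Qed.

Definition forced_by (u v : T) : bool :=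
  [exists t : 'I_#|T|, uncolored_nbrs e setT (coloured t) u == [set v]].

Lemma forced_by_inj u v w : forced_by u v -> forced_by u w -> v = w.
Proof.
move=> /existsP[t1 /eqP h1] /existsP[t2 /eqP h2].
wlog le12 : v w t1 t2 h1 h2 / t1 <= t2.
  by move=> wl; case: (leqP t1 t2) => [|/ltnW] le; [exact: wl le | symmetry; exact: wl le].
have := uncolored_nbrsS e setT u (iter_force_step_mono e setT X le12).
by rewrite h1 h2 sub1set inE => /eqP.
Qed.

Definition forced_from (B V : {set T}) : {set T} :=
  [set v in V | [exists s in B, forced_by s v]].

Lemma card_forced_from (B V : {set T}) : #|forced_from B V| <= #|B|.
Proof.
apply: (card_le_functional (R := fun v s => forced_by s v)); last first.
  by move=> v w s; apply: forced_by_inj.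
by move=> v; rewrite inE => /andP[_ /exists_inP[s sB fsv]]; exists s.
Qed.

(* Inside a component avoiding X, every colouring step of G is either forced
   from S or is a step of the colour change rule of G[V]. *)
Lemma coloured_sub_closure_forced_from V t :
  V \in comps -> V :&: X = set0 -> t <= #|T| ->
  coloured t :&: V \subset zf_closure e V (forced_from S V).
Proof.
move=> Vc VX; set Y := zf_closure e V _.
elim: t => [_|t IH tT]; first by rewrite /= setIC VX sub0set.
apply/subsetP=> v /setIP[vC vV].
have [vCt|vnC] := boolP (v \in coloured t).
  by apply: (subsetP (IH (ltnW tT))); rewrite inE vCt vV.
have [u /setIP[uC _] hu] := force_stepP vC vnC.
have : v \in uncolored_nbrs e setT (coloured t) u by rewrite hu set11.
rewrite !inE andTb => /andP[_ euv].
have [uS|uS] := boolP (u \in S).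
  apply: (subsetP (sub_zf_closure e V _)); rewrite inE vV; apply/exists_inP.
  by exists u => //; apply/existsP; exists (Ordinal tT); rewrite hu.
have uV := component_adj e_sym Vc uS vV euv.
have uY : u \in Y by apply: (subsetP (IH (ltnW tT))); rewrite inE uC uV.
apply: contraT => vY.
have uYV : u \in Y :&: V by rewrite inE uY.
case/negP: (stable_uncolored_nbrs v (zf_closure_stable e V (forced_from S V)) uYV).
rewrite -/Y eqEsubset sub1set !inE vY vV euv !andbT; apply/subsetP=> w.
rewrite !inE => /andP[wY /andP[wV euw]].
have : w \in uncolored_nbrs e setT (coloured t) u.
  rewrite !inE euw !andbT; apply: contra wY => wC.
  by apply: (subsetP (IH (ltnW tT))); rewrite inE wC wV.
by rewrite hu inE.
Qed.

Lemma avoided_component_zf_number V :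
  V \in comps -> V :&: X = set0 -> zf_closure e setT X = setT ->
  zf_number e V <= #|S|.
Proof.
move=> Vc VX hcl; apply: leq_trans (card_forced_from S V); apply: zf_number_le.
have FV : forced_from S V \subset V by apply/subsetP=> v; rewrite inE => /andP[].
rewrite /zero_forcing_set FV eqEsubset zf_closure_sub //=; apply/subsetP=> v vV.
apply: (subsetP (coloured_sub_closure_forced_from Vc VX (leqnn _))).
by rewrite inE vV andbT -/(zf_closure e setT X) hcl inE.
Qed.

End ForcingAcrossSeparator.

Theorem lemma1 (T : finType) (e : rel T)
  (e_sym : symmetric e) (e_irr : irreflexive e)
  (G_conn : connected_in e [set: T])
  (S : {set T})
  (S_sep : 2 <= #|components_minus e S|)
  (S_adj : forall s, s \in S -> forall V, V \in components_minus e S ->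
             exists2 v, v \in V & e s v) :
  forall X : {set T}, connected_forcing_set e X ->
    (#|components_minus e S| - 1 <=
       #|[set V in components_minus e S | V :&: X != set0]|)
    /\
    ((#|components_minus e S| == 2) &&
       [forall V in components_minus e S, #|S| < zf_number e V]
     || (3 <= #|components_minus e S|) ->
     S :&: X != set0).
Proof.
move=> X [/andP[_ /eqP hcl] Xc].
set cs := components_minus e S; set H := [set V in cs | V :&: X != set0].
have cardD : #|cs :\: H| = #|cs| - #|H|.
  by rewrite cardsD (setIidPr _) //; apply/subsetP=> V; rewrite inE => /andP[].
have avoided V : V \in cs :\: H -> V \in cs /\ V :&: X = set0.
  by rewrite !inE => /andP[+ Vc]; rewrite Vc negbK => /eqP.
have meet_all_but_one : #|cs| - 1 <= #|H|.
  rewrite leqNgt; apply/negP=> lt; have : 1 < #|cs :\: H| by rewrite cardD; lia.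
  case/card_gt1P=> V [W [/avoided[Vc VX] /avoided[Wc WX] VW]].
  by move: (avoided_components_not_forcing e_sym S_adj Vc Wc VW VX WX); rewrite hcl eqxx.
split=> // hyp; apply: contraT; rewrite negbK => /eqP SX.
have := connected_meets_one_component e_sym SX Xc; rewrite -/cs -/H => H1.
case/orP: hyp => [/andP[/eqP k2 /forall_inP zfV]|]; last by lia.
have : 0 < #|cs :\: H| by rewrite cardD; lia.
rewrite card_gt0 => /set0Pn[V /avoided[Vc VX]].
by have := zfV V Vc; have := avoided_component_zf_number e_sym Vc VX hcl; lia.
Qed.
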